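(* Every Schubert variety $X_w$ ($w\in S_n$) in $GL_n(\mathbb{C})/B$, including $G/B=X_{w_0}$ itself, is Palais–Smale.
   Context: Let $G=GL_n(\mathbb{C})$, $B$ the invertible upper-triangular matrices, and $T$ the diagonal matrices, acting on $G/B$ by left multiplication. Permutations are identified with permutation matrices via $we_i=e_{w(i)}$, and $s_{jk}$ is the transposition of $j$ and $k$. The Schubert variety is $X_w=\overline{BwB/B}$. The Bruhat order is defined by $v\le w$ iff $[v]\in X_w$, and $\ell(w)=\dim X_w$ is the number of pairs $i<j$ with $w^{-1}(i)>w^{-1}(j)$. $w_0$ is the longest permutation. The moment graph of $X_w$ (a GKM variety) has vertices $\{v\in S_n: v\le w\}$ and an (undirected) edge between $v$ and $s_{jk}v$ for every $j<k$ with both $v,s_{jk}v\le w$, labeled by the torus weight $\pm(t_j-t_k)$. A GKM variety is called Palais–Smale if its moment graph can be directed so that there is an edge directed from $v$ to $u$ only if there are more edges directed out of $v$ than out of $u$. *)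

From mathcomp Require Import all_boot all_order all_fingroup.
Set Implicit Arguments. Unset Strict Implicit. Unset Printing Implicit Defensive.

Open Scope group_scope.

(* Permutations of {0,..,n-1} are elements of 'S_n.  In mathcomp,
   (s * t) x = t (s x) (lemma permM), so the composite s_{jk} o v
   (i.e. the permutation matrix product s_{jk} v) is (v * tperm j k). *)

Definition lmul_transp (n : nat) (j k : 'I_n) (v : 'S_n) : 'S_n :=
  v * tperm j k.

Definition len (n : nat) (w : 'S_n) : nat :=
  #|[set p : 'I_n * 'I_n | (p.1 < p.2)%N && (w^-1 p.2 < w^-1 p.1)%N]|.

Definition bruhat_step (n : nat) : rel 'S_n :=
  fun a b => [exists j : 'I_n, exists k : 'I_n,
                [&& (j < k)%N, b == lmul_transp j k a & (len a < len b)%N]].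

Definition bruhat_le (n : nat) (v w : 'S_n) : bool := connect (@bruhat_step n) v w.

Definition moment_edge (n : nat) (w : 'S_n) (v u : 'S_n) : bool :=
  [&& bruhat_le v w, bruhat_le u w &
      [exists j : 'I_n, exists k : 'I_n, (j < k)%N && (u == lmul_transp j k v)]].

Definition orientation (n : nat) (w : 'S_n) (D : rel 'S_n) : Prop :=
  (forall v u, D v u -> moment_edge w v u) /\
  (forall v u, moment_edge w v u -> D v u || D u v) /\
  (forall v u, D v u -> ~~ D u v).

Definition outdeg (n : nat) (D : rel 'S_n) (v : 'S_n) : nat :=
  #|[set u | D v u]|.

Definition palais_smale (n : nat) (w : 'S_n) : Prop :=
  exists D : rel 'S_n, orientation w D /\
    (forall v u, D v u -> (outdeg D u < outdeg D v)%N).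

(* Orient each edge of the moment graph of X_w towards the shorter
   permutation.  This is possible because multiplying by a transposition
   always changes the length: if (j, k) is not an inversion of v, then
   exchanging j and k on the pairs not contained in [j, k] maps the
   inversions of v injectively onto inversions of v t_jk other than (j, k).
   For v <= w the out-neighbours of v are then exactly the v t_jk with
   (j, k) an inversion of v, all of which lie below v and hence below w;
   so the out-degree of v is l(v), which strictly drops along every edge. *)

From mathcomp Require Import all_boot all_order all_fingroup.
From mathcomp Require Import zify.
Set Implicit Arguments. Unset Strict Implicit. Unset Printing Implicit Defensive.
Open Scope group_scope.

Section Inversions.
Variable n : nat.
Implicit Types (v : 'S_n) (j k a b c d x : 'I_n).

Definition inversions v : {set 'I_n * 'I_n} :=
  [set p : 'I_n * 'I_n | (p.1 < p.2)%N && (v^-1 p.2 < v^-1 p.1)%N].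

Lemma lenE v : len v = #|inversions v|.
Proof. by []. Qed.

Lemma invM_tperm v j k x : (v * tperm j k)^-1 x = v^-1 (tperm j k x).
Proof. by rewrite invMg tpermV permM. Qed.

Lemma mul_tpermK v j k : v * tperm j k * tperm j k = v.
Proof. by rewrite -mulgA tperm2 mulg1. Qed.

Lemma tperm_cases j k a :
  [\/ a = j, a = k | [/\ a != j :> nat, a != k :> nat & tperm j k a = a]].
Proof.
case: tpermP => [|| /eqP aj /eqP ak]; [by constructor 1 | by constructor 2 |].
by constructor 3; rewrite !val_eqE.
Qed.

Ltac case_tperm j k a :=
  let Ea := fresh "Ea" in
  case: (tperm_cases j k a) => [Ea|Ea|[? ? Ea]];
  [subst a | subst a | rewrite ?Ea]; rewrite ?tpermL ?tpermR.

Definition between j k x := (j <= x <= k)%N.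

Definition swap_outside j k (p : 'I_n * 'I_n) : 'I_n * 'I_n :=
  if between j k p.1 && between j k p.2 then p
  else (tperm j k p.1, tperm j k p.2).

Lemma swap_outsideK j k : (j < k)%N -> involutive (swap_outside j k).
Proof.
move=> jk [a b]; rewrite /swap_outside /=.
case inside: (between j k a && between j k b); first by rewrite inside.
rewrite /= !tpermK ifF //.
by move: inside; rewrite /between; case_tperm j k a; case_tperm j k b; lia.
Qed.

Lemma swap_outside_inversion v j k p : (j < k)%N -> (v^-1 j < v^-1 k)%N ->
  p \in inversions v -> swap_outside j k p \in inversions (v * tperm j k) :\ (j, k).
Proof.
move=> jk vjk; case: p => a b; rewrite /swap_outside !inE /=.
case: ifP; rewrite /between /= xpair_eqE !invM_tperm ?tpermK -!val_eqE /=;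
  case_tperm j k a; case_tperm j k b; lia.
Qed.

Lemma len_mul_tperm_gt v j k : (j < k)%N -> (v^-1 j < v^-1 k)%N ->
  (len v < len (v * tperm j k))%N.
Proof.
move=> jk vjk; rewrite !lenE (cardsD1 (j, k) (inversions (v * tperm j k))).
have -> : (j, k) \in inversions (v * tperm j k).
  by rewrite inE /= !invM_tperm tpermL tpermR jk.
rewrite ltnS -(card_imset (inversions v) (can_inj (swap_outsideK jk))).
apply/subset_leq_card/subsetP => _ /imsetP[p p_inv ->].
exact: swap_outside_inversion.
Qed.

Lemma ltn_len_mul_tperm v j k : (j < k)%N ->
  (len (v * tperm j k) < len v)%N = (v^-1 k < v^-1 j)%N.
Proof.
move=> jk; case: (ltngtP (v^-1 j) (v^-1 k)) => [vjk | vkj | /ord_inj/perm_inj jk_eq].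
- by have := len_mul_tperm_gt jk vjk; lia.
- have := len_mul_tperm_gt (v := v * tperm j k) jk.
  by rewrite !invM_tperm tpermL tpermR mul_tpermK => /(_ vkj).
- by move: jk; rewrite jk_eq ltnn.
Qed.

Lemma len_mul_tperm_neq v j k : (j < k)%N -> len (v * tperm j k) != len v.
Proof.
move=> jk; rewrite neq_ltn ltn_len_mul_tperm //.
case: (ltngtP (v^-1 j) (v^-1 k)) => [vjk | // | /ord_inj/perm_inj jk_eq].
- exact: len_mul_tperm_gt.
- by move: jk; rewrite jk_eq ltnn.
Qed.

Lemma eq_tperm_ltn a b c d : (a < b)%N -> (c < d)%N ->
  tperm a b = tperm c d -> (a, b) = (c, d).
Proof.
move=> ab cd /(congr1 (fun s : 'S_n => s a)); rewrite tpermL.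
by case_tperm c d a => Eb; subst b => //; lia.
Qed.
End Inversions.

Section DescentOrientation.
Variables (n : nat) (w : 'S_n).
Implicit Types (v u x : 'S_n) (j k : 'I_n).

Lemma moment_edge_sym v u : moment_edge w v u -> moment_edge w u v.
Proof.
case/and3P => vw uw /existsP[j /existsP[k /andP[jk /eqP uE]]].
apply/and3P; split => //; apply/existsP; exists j; apply/existsP; exists k.
by rewrite jk uE /lmul_transp mul_tpermK eqxx.
Qed.

Definition descent_orientation : rel 'S_n :=
  fun v u => moment_edge w v u && (len u < len v)%N.

Lemma orientation_descent : orientation w descent_orientation.
Proof.
split; first by move=> v u /andP[].
split=> [v u e | v u /andP[_ vu]].
  rewrite /descent_orientation e moment_edge_sym //=.
  case/and3P: e => _ _ /existsP[j /existsP[k /andP[jk /eqP ->]]].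
  by rewrite -neq_ltn /lmul_transp len_mul_tperm_neq.
by apply/negP => /andP[_ uv]; move: (ltn_trans uv vu); rewrite ltnn.
Qed.

Lemma bruhat_le_mul_tperm x j k : (j < k)%N -> (len (x * tperm j k) < len x)%N ->
  bruhat_le x w -> bruhat_le (x * tperm j k) w.
Proof.
move=> jk lt_len; apply: connect_trans; apply: connect1.
apply/existsP; exists j; apply/existsP; exists k.
by rewrite jk lt_len /lmul_transp mul_tpermK eqxx.
Qed.

Lemma outdeg_descent x : bruhat_le x w -> outdeg descent_orientation x = len x.
Proof.
move=> xw; rewrite /outdeg lenE.
have tperm_inj : {in inversions x &, injective (fun p => x * tperm p.1 p.2)}.
  move=> [a b] [c d]; rewrite !inE /= => /andP[ab _] /andP[cd _] /mulgI.
  exact: eq_tperm_ltn.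
rewrite -(card_in_imset tperm_inj); apply: eq_card => u; rewrite inE.
apply/andP/imsetP => [[/and3P[_ uw /existsP[j /existsP[k /andP[jk /eqP ->]]]]] | ].
  by rewrite ltn_len_mul_tperm // => kj; exists (j, k); rewrite // inE /= jk.
case=> -[a b]; rewrite inE /= => /andP[ab ba] ->.
have lt_len : (len (x * tperm a b) < len x)%N by rewrite ltn_len_mul_tperm.
split=> //; apply/and3P; split => //; first exact: bruhat_le_mul_tperm.
by apply/existsP; exists a; apply/existsP; exists b; rewrite ab eqxx.
Qed.

End DescentOrientation.

Theorem mainTheorem3 (n : nat) (w : 'S_n) : palais_smale w.
Proof.
exists (descent_orientation w); split; first exact: orientation_descent.
move=> v u /andP[e lt_len]; case/and3P: (e) => vw uw _.
by rewrite !outdeg_descent.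
Qed.
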